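(* Let $\mathbb{C}$ be an isostable squares category. For every $n\ge0$, the forgetful functor $U_n:S^{\square}_n\mathbb{C}\to\mathcal{V}_n\mathbb{C}$, sending an object $(A_{jk})$ to its rightmost column $A_{0n}\twoheadrightarrow A_{1n}\twoheadrightarrow\cdots\twoheadrightarrow A_{n-1,n}\twoheadrightarrow A_{nn}=O$, is an equivalence of categories.
   Context: A squares category is a flat double category (squares uniquely determined by their boundary; we say a boundary ''is a square'') with a distinguished object $O$ initial in the horizontal category $\mathcal{H}_{\mathbb{C}}$ (morphisms $\rightarrowtail$) and terminal in the vertical category $\mathcal{V}_{\mathbb{C}}$ (morphisms $\twoheadrightarrow$). A vertical $f:A\twoheadrightarrow B$ is a vertical weak equivalence if the boundary (top $O\rightarrowtail A$, left $\mathrm{id}_O$, right $f$, bottom $O\rightarrowtail B$) is a square; a horizontal $g:A\rightarrowtail B$ is a horizontal weak equivalence if the boundary (top $g$, left $A\twoheadrightarrow O$, right $B\twoheadrightarrow O$, bottom $\mathrm{id}_O$) is a square. Vertical natural transformations between double functors of flat double categories: vertical components $\tau_A$ with $(Ff,\tau_A,\tau_{A'},Gf)$ a square for each horizontal $f$ and commuting naturality squares in the vertical category; $\mathrm{Fun}^v$ is the functor category. With $\boxdot$ the flat double category generated by one square (corners $a,b,c,d$, horizontal $a\rightarrowtail b,c\rightarrowtail d$, vertical $a\twoheadrightarrow c,b\twoheadrightarrow d$), $i:\mathrm{span}\hookrightarrow\boxdot$ on $a\rightarrowtail b,a\twoheadrightarrow c$ and $j:\mathrm{cospan}\hookrightarrow\boxdot$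 on $b\twoheadrightarrow d,c\rightarrowtail d$: a squares category is stable if (i) $i^*$ on $\mathrm{Fun}^v(-,\mathbb{C})$ has a section functor $s$, (ii) there is a natural transformation $w:si^*\Rightarrow\mathrm{id}$ with components the identity at $a,b,c$, (iii) $j^*$ has a section functor $t$, (iv) there is a natural transformation $u:tj^*\Rightarrow\mathrm{id}$ with components the identity at $b,c,d$ and a vertical weak equivalence at $a$. It is isostable if it is stable, its weak equivalences are invertible, and for every boundary with top $f:A\rightarrowtail B$, bottom $k:C\rightarrowtail D$ and vertical isomorphisms $g:A\twoheadrightarrow C$, $h:B\twoheadrightarrow D$, this boundary is a square iff the boundary with top $k$, left $g^{-1}$, right $h^{-1}$, bottom $f$ is a square. $S^{\square}_n\mathbb{C}$: objects are families $(A_{jk})_{0\le j\le k\le n}$ with $A_{jj}=O$, horizontal $A_{jk}\rightarrowtail A_{j,k+1}$, vertical $A_{jk}\twoheadrightarrow A_{j+1,k}$, each unit cell ($j<k<n$) a square; morphisms are families of vertical morphisms $A_{jk}\twoheadrightarrow A'_{jk}$ such that every cell formed with a horizontal generator is a square and every cell formed with a vertical generator commutes in $\mathcal{V}_{\mathbb{C}}$ (their components are vertical weak equivalences). $\mathcal{V}_n\mathbb{C}$ is the category whose objects are sequences $A_1\twoheadrightarrow\cdots\twoheadrightarrow A_n\twoheadrightarrow O$ of vertical morphisms and whose morphisms are families of vertical weak equivalences $A_i\twoheadrightarrow A_i'$ making all the resulting squares commute in $\mathcal{V}_{\mathbb{C}}$. *)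

From Stdlib Require Import ProofIrrelevance FunctionalExtensionality.
From mathcomp Require Import all_boot.
Set Implicit Arguments. Unset Strict Implicit. Unset Printing Implicit Defensive.

(* ccomp f g = "first f, then g".                                      *)
Record Cat := BuildCat {
  ob : Type;
  hom : ob -> ob -> Type;
  cid : forall a, hom a a;
  ccomp : forall a b c, hom a b -> hom b c -> hom a c;
  ccomp_id_l : forall a b (f : hom a b), ccomp (cid a) f = f;
  ccomp_id_r : forall a b (f : hom a b), ccomp f (cid b) = f;
  ccomp_assoc : forall a b c d (f : hom a b) (g : hom b c) (h : hom c d),
      ccomp (ccomp f g) h = ccomp f (ccomp g h) }.
Arguments hom {_} _ _.
Arguments cid {_} _.
Arguments ccomp {_ _ _ _} _ _.

Record Functor (C D : Cat) := BuildFunctor {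
  fobj :> ob C -> ob D;
  fhom : forall a b, hom a b -> hom (fobj a) (fobj b);
  fhom_id : forall a, fhom (cid a) = cid (fobj a);
  fhom_comp : forall a b c (f : hom a b) (g : hom b c),
      fhom (ccomp f g) = ccomp (fhom f) (fhom g) }.
Arguments fhom {_ _} _ {_ _} _.

Definition IdF (C : Cat) : Functor C C.
Proof.
refine (@BuildFunctor C C (fun a => a) (fun a b f => f) _ _); by [].
Defined.

Definition CompF (C D E : Cat) (F : Functor C D) (G : Functor D E) : Functor C E.
Proof.
refine (@BuildFunctor C E (fun a => G (F a)) (fun a b f => fhom G (fhom F f)) _ _).
- by move=> a; rewrite !fhom_id.
- by move=> a b c f g; rewrite !fhom_comp.
Defined.

Record NatIso (C D : Cat) (F G : Functor C D) := BuildNatIso {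
  ni_fwd : forall a, hom (F a) (G a);
  ni_bwd : forall a, hom (G a) (F a);
  ni_fb : forall a, ccomp (ni_fwd a) (ni_bwd a) = cid (F a);
  ni_bf : forall a, ccomp (ni_bwd a) (ni_fwd a) = cid (G a);
  ni_nat : forall a b (f : hom a b),
      ccomp (fhom F f) (ni_fwd b) = ccomp (ni_fwd a) (fhom G f) }.

Definition is_equivalence (C D : Cat) (F : Functor C D) : Prop :=
  exists G : Functor D C,
    inhabited (NatIso (IdF C) (CompF F G)) /\
    inhabited (NatIso (CompF G F) (IdF D)).

(* Flat double categories.  Horizontal morphisms dH (>->), vertical    *)
(* morphisms dV (->>), both with diagrammatic composition.  Squares    *)
(* are a Prop-valued predicate on boundaries (flatness):               *)
(*   dSq top left right bottom,                                        *)
(*   top : a >-> b, left : a ->> c, right : b ->> d, bottom : c >-> d. *)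
Record FlatDouble := BuildFlatDouble {
  dob : Type;
  dH : dob -> dob -> Type;
  idH : forall a, dH a a;
  compH : forall a b c, dH a b -> dH b c -> dH a c;
  compH_id_l : forall a b (f : dH a b), compH (idH a) f = f;
  compH_id_r : forall a b (f : dH a b), compH f (idH b) = f;
  compH_assoc : forall a b c d (f : dH a b) (g : dH b c) (h : dH c d),
      compH (compH f g) h = compH f (compH g h);
  dV : dob -> dob -> Type;
  idV : forall a, dV a a;
  compV : forall a b c, dV a b -> dV b c -> dV a c;
  compV_id_l : forall a b (f : dV a b), compV (idV a) f = f;
  compV_id_r : forall a b (f : dV a b), compV f (idV b) = f;
  compV_assoc : forall a b c d (f : dV a b) (g : dV b c) (h : dV c d),
      compV (compV f g) h = compV f (compV g h);
  dSq : forall a b c d, dH a b -> dV a c -> dV b d -> dH c d -> Prop;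
  sq_idH : forall a c (v : dV a c), dSq (idH a) v v (idH c);
  sq_idV : forall a b (h : dH a b), dSq h (idV a) (idV b) h;
  sq_compH : forall a b e c d f (t : dH a b) (t' : dH b e) (l : dV a c)
      (m : dV b d) (r : dV e f) (u : dH c d) (u' : dH d f),
      dSq t l m u -> dSq t' m r u' ->
      dSq (compH t t') l r (compH u u');
  sq_compV : forall a b c d e f (t : dH a b) (l : dV a c) (r : dV b d)
      (m : dH c d) (l' : dV c e) (r' : dV d f) (u : dH e f),
      dSq t l r m -> dSq m l' r' u ->
      dSq t (compV l l') (compV r r') u }.
Arguments dH {_} _ _.
Arguments dV {_} _ _.
Arguments idH {_} _.
Arguments idV {_} _.
Arguments compH {_ _ _ _} _ _.
Arguments compV {_ _ _ _} _ _.
Arguments dSq {_ _ _ _ _} _ _ _ _.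

Record SquaresCat := BuildSquaresCat {
  sqd :> FlatDouble;
  sO : dob sqd;
  zH : forall A, dH sO A;
  zH_uniq : forall A (f : dH sO A), f = zH A;
  zV : forall A, dV A sO;
  zV_uniq : forall A (f : dV A sO), f = zV A }.
Arguments zH {_} _.
Arguments zV {_} _.

Section SquaresCategories.
Variable C : SquaresCat.
Local Notation Ob := (dob C).
Local Notation H := (@dH C).
Local Notation V := (@dV C).
Local Notation O := (sO C).

Definition vwe (A B : Ob) (f : V A B) : Prop :=
  dSq (zH A) (idV O) f (zH B).
Definition hwe (A B : Ob) (g : H A B) : Prop :=
  dSq g (zV A) (zV B) (idH O).

(* ---- the vertical functor categories Fun^v(span,C), Fun^v(cospan,C),
        Fun^v(box,C), written out explicitly ---- *)

Record SpanObj := BuildSpanObj {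
  spA : Ob; spB : Ob; spC : Ob;
  spf : H spA spB; spg : V spA spC }.
Record SpanHom (X Y : SpanObj) := BuildSpanHom {
  spta : V (spA X) (spA Y); sptb : V (spB X) (spB Y); sptc : V (spC X) (spC Y);
  spt_f : dSq (spf X) spta sptb (spf Y);
  spt_g : compV (spg X) sptc = compV spta (spg Y) }.

Definition span_id (X : SpanObj) : SpanHom X X.
Proof.
refine (@BuildSpanHom X X (idV _) (idV _) (idV _) _ _).
- exact: sq_idV.
- by rewrite compV_id_l compV_id_r.
Defined.

Definition span_comp (X Y Z : SpanObj) (p : SpanHom X Y) (q : SpanHom Y Z) :
  SpanHom X Z.
Proof.
refine (@BuildSpanHom X Z (compV (spta p) (spta q)) (compV (sptb p) (sptb q))
          (compV (sptc p) (sptc q)) _ _).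
- exact: sq_compV (spt_f p) (spt_f q).
- by rewrite -compV_assoc spt_g !compV_assoc spt_g.
Defined.

Record CospanObj := BuildCospanObj {
  coB : Ob; coC : Ob; coD : Ob;
  coh : V coB coD; cok : H coC coD }.
Record CospanHom (X Y : CospanObj) := BuildCospanHom {
  ctb : V (coB X) (coB Y); ctc : V (coC X) (coC Y); ctd : V (coD X) (coD Y);
  ct_k : dSq (cok X) ctc ctd (cok Y);
  ct_h : compV (coh X) ctd = compV ctb (coh Y) }.

Definition cospan_id (X : CospanObj) : CospanHom X X.
Proof.
refine (@BuildCospanHom X X (idV _) (idV _) (idV _) _ _).
- exact: sq_idV.
- by rewrite compV_id_l compV_id_r.
Defined.

Definition cospan_comp (X Y Z : CospanObj) (p : CospanHom X Y) (q : CospanHom Y Z) :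
  CospanHom X Z.
Proof.
refine (@BuildCospanHom X Z (compV (ctb p) (ctb q)) (compV (ctc p) (ctc q))
          (compV (ctd p) (ctd q)) _ _).
- exact: sq_compV (ct_k p) (ct_k q).
- by rewrite -compV_assoc ct_h !compV_assoc ct_h.
Defined.

Record BoxObj := BuildBoxObj {
  qA : Ob; qB : Ob; qC : Ob; qD : Ob;
  qf : H qA qB; qg : V qA qC; qh : V qB qD; qk : H qC qD;
  qsq : dSq qf qg qh qk }.
Record BoxHom (X Y : BoxObj) := BuildBoxHom {
  qta : V (qA X) (qA Y); qtb : V (qB X) (qB Y);
  qtc : V (qC X) (qC Y); qtd : V (qD X) (qD Y);
  qt_f : dSq (qf X) qta qtb (qf Y);
  qt_k : dSq (qk X) qtc qtd (qk Y);
  qt_g : compV (qg X) qtc = compV qta (qg Y);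
  qt_h : compV (qh X) qtd = compV qtb (qh Y) }.

Definition i_obj (X : BoxObj) : SpanObj := BuildSpanObj (qf X) (qg X).
Definition i_hom (X Y : BoxObj) (p : BoxHom X Y) : SpanHom (i_obj X) (i_obj Y) :=
  @BuildSpanHom (i_obj X) (i_obj Y) (qta p) (qtb p) (qtc p) (qt_f p) (qt_g p).
Definition j_obj (X : BoxObj) : CospanObj := BuildCospanObj (qh X) (qk X).
Definition j_hom (X Y : BoxObj) (p : BoxHom X Y) : CospanHom (j_obj X) (j_obj Y) :=
  @BuildCospanHom (j_obj X) (j_obj Y) (qtb p) (qtc p) (qtd p) (qt_k p) (qt_h p).

(* (i)+(ii): a section s of i^* (so s(X) agrees with X at a,b,c, and s(p)
   agrees with p at a,b,c: only the d-part is data), and a natural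
   transformation w : s i^* => id whose a,b,c components are identities. *)
Record stable_i_ii := BuildStableIII {
  s_D : SpanObj -> Ob;
  s_h : forall X, V (spB X) (s_D X);
  s_k : forall X, H (spC X) (s_D X);
  s_sq : forall X, dSq (spf X) (spg X) (s_h X) (s_k X);
  s_d : forall X Y, SpanHom X Y -> V (s_D X) (s_D Y);
  s_d_k : forall X Y (p : SpanHom X Y), dSq (s_k X) (sptc p) (s_d p) (s_k Y);
  s_d_h : forall X Y (p : SpanHom X Y),
      compV (s_h X) (s_d p) = compV (sptb p) (s_h Y);
  s_d_id : forall X, s_d (span_id X) = idV (s_D X);
  s_d_comp : forall X Y Z (p : SpanHom X Y) (q : SpanHom Y Z),
      s_d (span_comp p q) = compV (s_d p) (s_d q);
  (* w_X : s(i^* X) -> X, components (id, id, id, w_d X) *)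
  w_d : forall X : BoxObj, V (s_D (i_obj X)) (qD X);
  w_f : forall X : BoxObj, dSq (qf X) (idV (qA X)) (idV (qB X)) (qf X);
  w_k : forall X : BoxObj, dSq (s_k (i_obj X)) (idV (qC X)) (w_d X) (qk X);
  w_g : forall X : BoxObj, compV (qg X) (idV (qC X)) = compV (idV (qA X)) (qg X);
  w_h : forall X : BoxObj, compV (s_h (i_obj X)) (w_d X) = compV (idV (qB X)) (qh X);
  w_nat : forall X Y (p : BoxHom X Y),
      compV (s_d (i_hom p)) (w_d Y) = compV (w_d X) (qtd p) }.

(* (iii)+(iv): a section t of j^* and u : t j^* => id with components the
   identity at b,c,d and a vertical weak equivalence at a. *)
Record stable_iii_iv := BuildStableIIIIV {
  t_A : CospanObj -> Ob;
  t_f : forall Y, H (t_A Y) (coB Y);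
  t_g : forall Y, V (t_A Y) (coC Y);
  t_sq : forall Y, dSq (t_f Y) (t_g Y) (coh Y) (cok Y);
  t_a : forall X Y, CospanHom X Y -> V (t_A X) (t_A Y);
  t_a_f : forall X Y (p : CospanHom X Y), dSq (t_f X) (t_a p) (ctb p) (t_f Y);
  t_a_g : forall X Y (p : CospanHom X Y),
      compV (t_g X) (ctc p) = compV (t_a p) (t_g Y);
  t_a_id : forall X, t_a (cospan_id X) = idV (t_A X);
  t_a_comp : forall X Y Z (p : CospanHom X Y) (q : CospanHom Y Z),
      t_a (cospan_comp p q) = compV (t_a p) (t_a q);
  (* u_X : t(j^* X) -> X, components (u_a X, id, id, id) *)
  u_a : forall X : BoxObj, V (t_A (j_obj X)) (qA X);
  u_a_we : forall X : BoxObj, vwe (u_a X);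
  u_f : forall X : BoxObj, dSq (t_f (j_obj X)) (u_a X) (idV (qB X)) (qf X);
  u_k : forall X : BoxObj, dSq (qk X) (idV (qC X)) (idV (qD X)) (qk X);
  u_g : forall X : BoxObj, compV (t_g (j_obj X)) (idV (qC X)) = compV (u_a X) (qg X);
  u_h : forall X : BoxObj, compV (qh X) (idV (qD X)) = compV (idV (qB X)) (qh X);
  u_nat : forall X Y (p : BoxHom X Y),
      compV (t_a (j_hom p)) (u_a Y) = compV (u_a X) (qta p) }.

Definition stable : Prop := inhabited stable_i_ii /\ inhabited stable_iii_iv.

Definition weq_invertible : Prop :=
  (forall (A B : Ob) (f : V A B), vwe f ->
     exists g : V B A, compV f g = idV A /\ compV g f = idV B) /\
  (forall (A B : Ob) (f : H A B), hwe f ->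
     exists g : H B A, compH f g = idH A /\ compH g f = idH B).

Definition inverse_squares : Prop :=
  forall (A B C' D : Ob) (f : H A B) (k : H C' D)
         (g : V A C') (g' : V C' A) (h : V B D) (h' : V D B),
    compV g g' = idV A -> compV g' g = idV C' ->
    compV h h' = idV B -> compV h' h = idV D ->
    (dSq f g h k <-> dSq k g' h' f).

Definition isostable : Prop := stable /\ weq_invertible /\ inverse_squares.

(* S^square_n C.  Entries A j k for 0 <= j <= k <= n (values of the    *)
(* function outside this range are irrelevant: no morphism data refers *)
(* to them).                                                           *)
Variable n : nat.

Record Sobj := BuildSobj {
  sA : nat -> nat -> Ob;
  sA_diag : forall j, j <= n -> sA j j = O;
  sh : forall j k, j <= k -> k < n -> H (sA j k) (sA j k.+1);
  sv : forall j k, j < k -> k <= n -> V (sA j k) (sA j.+1 k);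
  s_cell : forall j k (hjk : j < k) (hkn : k < n),
      dSq (sh (ltnW hjk) hkn) (sv hjk (ltnW hkn))
          (sv (k := k.+1) (ltnW hjk) hkn) (sh (j := j.+1) hjk hkn) }.

Record Shom (X Y : Sobj) := BuildShom {
  st : forall j k, j <= k -> k <= n -> V (sA X j k) (sA Y j k);
  st_h : forall j k (hjk : j <= k) (hkn : k < n),
      dSq (sh X hjk hkn) (st hjk (ltnW hkn)) (st (k := k.+1) (leqW hjk) hkn)
          (sh Y hjk hkn);
  st_v : forall j k (hjk : j < k) (hkn : k <= n),
      compV (sv X hjk hkn) (st (j := j.+1) hjk hkn)
      = compV (st (ltnW hjk) hkn) (sv Y hjk hkn) }.

Lemma st_pi (X Y : Sobj) (p : Shom X Y) j k (h1 h1' : j <= k) (h2 h2' : k <= n) :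
  st p h1 h2 = st p h1' h2'.
Proof. by rewrite (bool_irrelevance h1 h1') (bool_irrelevance h2 h2'). Qed.

Lemma Shom_ext (X Y : Sobj) (p q : Shom X Y) :
  (forall j k (h1 : j <= k) (h2 : k <= n), st p h1 h2 = st q h1 h2) -> p = q.
Proof.
case: p => p1 p2 p3; case: q => q1 q2 q3 /= E.
have E' : p1 = q1.
  apply: functional_extensionality_dep => j; apply: functional_extensionality_dep => k.
  apply: functional_extensionality_dep => h1; apply: functional_extensionality_dep => h2.
  exact: E.
subst q1; by rewrite (proof_irrelevance _ p2 q2) (proof_irrelevance _ p3 q3).
Qed.

Definition Sid (X : Sobj) : Shom X X.
Proof.
refine (@BuildShom X X (fun j k _ _ => idV _) _ _).
- move=> j k hjk hkn; exact: sq_idV.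
- by move=> j k hjk hkn; rewrite compV_id_l compV_id_r.
Defined.

Definition Scomp (X Y Z : Sobj) (p : Shom X Y) (q : Shom Y Z) : Shom X Z.
Proof.
refine (@BuildShom X Z (fun j k h1 h2 => compV (st p h1 h2) (st q h1 h2)) _ _).
- move=> j k hjk hkn; exact: sq_compV (st_h p hjk hkn) (st_h q hjk hkn).
- move=> j k hjk hkn.
  by rewrite -compV_assoc st_v !compV_assoc st_v.
Defined.

Definition Scat : Cat.
Proof.
refine (@BuildCat Sobj Shom Sid Scomp _ _ _).
- by move=> a b f; apply: Shom_ext => j k h1 h2 /=; rewrite compV_id_l.
- by move=> a b f; apply: Shom_ext => j k h1 h2 /=; rewrite compV_id_r.
- by move=> a b c d f g h; apply: Shom_ext => j k h1 h2 /=; rewrite compV_assoc.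
Defined.

(* V_n C, indexed 0-based: A_0 ->> A_1 ->> ... ->> A_{n-1} (->> O, the *)
(* last map being the unique one to the terminal object O).            *)
Record Vobj := BuildVobj {
  vA : nat -> Ob;
  vp : forall i, i.+1 < n -> V (vA i) (vA i.+1) }.

Record Vhom (X Y : Vobj) := BuildVhom {
  vt : forall i, i < n -> V (vA X i) (vA Y i);
  vt_we : forall i (hi : i < n), vwe (vt hi);
  vt_comm : forall i (hi : i.+1 < n),
      compV (vp X hi) (vt hi) = compV (vt (ltnW hi)) (vp Y hi);
  vt_last : forall i (hi : i < n),
      compV (vt hi) (zV (vA Y i)) = zV (vA X i) }.

Lemma Vhom_ext (X Y : Vobj) (p q : Vhom X Y) :
  (forall i (hi : i < n), vt p hi = vt q hi) -> p = q.
Proof.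
case: p => p1 p2 p3 p4; case: q => q1 q2 q3 q4 /= E.
have E' : p1 = q1.
  apply: functional_extensionality_dep => i; apply: functional_extensionality_dep => hi.
  exact: E.
subst q1; by rewrite (proof_irrelevance _ p2 q2) (proof_irrelevance _ p3 q3)
  (proof_irrelevance _ p4 q4).
Qed.

Lemma vwe_id (A : Ob) : vwe (idV A).
Proof. exact: sq_idV. Qed.

Lemma vwe_comp (A B D : Ob) (f : V A B) (g : V B D) :
  vwe f -> vwe g -> vwe (compV f g).
Proof.
move=> hf hg; have := sq_compV hf hg; by rewrite compV_id_l.
Qed.

Definition Vid (X : Vobj) : Vhom X X.
Proof.
refine (@BuildVhom X X (fun i _ => idV _) _ _ _).
- move=> i hi; exact: vwe_id.
- by move=> i hi; rewrite compV_id_l compV_id_r.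
- by move=> i hi; rewrite compV_id_l.
Defined.

Definition Vcomp (X Y Z : Vobj) (p : Vhom X Y) (q : Vhom Y Z) : Vhom X Z.
Proof.
refine (@BuildVhom X Z (fun i hi => compV (vt p hi) (vt q hi)) _ _ _).
- move=> i hi; exact: vwe_comp (vt_we p hi) (vt_we q hi).
- by move=> i hi; rewrite -compV_assoc vt_comm !compV_assoc vt_comm.
- by move=> i hi; rewrite compV_assoc !vt_last.
Defined.

Definition Vcat : Cat.
Proof.
refine (@BuildCat Vobj Vhom Vid Vcomp _ _ _).
- by move=> a b f; apply: Vhom_ext => i hi /=; rewrite compV_id_l.
- by move=> a b f; apply: Vhom_ext => i hi /=; rewrite compV_id_r.
- by move=> a b c d f g h; apply: Vhom_ext => i hi /=; rewrite compV_assoc.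
Defined.

Definition U_obj (X : Sobj) : Vobj :=
  BuildVobj (fun i (hi : i.+1 < n) => sv X (j := i) (k := n) (ltnW hi) (leqnn n)).

Lemma st_vwe (X Y : Sobj) (p : Shom X Y) j k (h1 : j <= k) (h2 : k <= n) :
  vwe (st p h1 h2).
Proof.
elim: k h1 h2 => [|k IH] h1 h2.
- case: j h1 => [|j] h1 //.
  move: (st p h1 h2) (sA_diag X h2) (sA_diag Y h2).
  move: (sA X 0 0) (sA Y 0 0) => a b f ea eb; subst a b.
  have -> : f = idV O by rewrite (zV_uniq f) (zV_uniq (idV O)).
  exact: vwe_id.
- have [ej|hne] := eqVneq j k.+1; last first.
  + have hjk : j <= k by rewrite -ltnS ltn_neqAle hne h1.
    have hkn : k < n by [].
    have := sq_compH (IH hjk (ltnW hkn)) (st_h p hjk hkn).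
    rewrite (zH_uniq (compH _ _)) (zH_uniq (compH (zH (sA Y j k)) _)).
    by rewrite (st_pi p (leqW hjk) h1 hkn h2).
  + subst j.
    move: (st p h1 h2) (sA_diag X h2) (sA_diag Y h2).
    move: (sA X k.+1 k.+1) (sA Y k.+1 k.+1) => a b f ea eb; subst a b.
    have -> : f = idV O by rewrite (zV_uniq f) (zV_uniq (idV O)).
    exact: vwe_id.
Qed.

Definition U_hom (X Y : Sobj) (p : Shom X Y) : Vhom (U_obj X) (U_obj Y).
Proof.
refine (@BuildVhom (U_obj X) (U_obj Y)
          (fun i (hi : i < n) => st p (ltnW hi) (leqnn n)) _ _ _).
- move=> i hi; exact: st_vwe.
- move=> i hi /=.
  apply: etrans (etrans _ (st_v p (ltnW hi) (leqnn n))) _.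
  + by congr compV; apply: st_pi.
  + by congr compV; apply: st_pi.
- move=> i hi; by rewrite (zV_uniq (compV _ _)).
Defined.

Definition U_functor : Functor Scat Vcat.
Proof.
refine (@BuildFunctor Scat Vcat U_obj U_hom _ _).
- by move=> a; apply: Vhom_ext.
- by move=> a b c f g; apply: Vhom_ext.
Defined.

End SquaresCategories.

(* By stability (iii)-(iv) and the invertibility of weak equivalences, a
   morphism of squares is determined by its restriction to the cospan
   [b ->> d <-< c], and every morphism of cospans extends to one ([fill]).
   A morphism of staircases can therefore be built, and is determined, cell by
   cell from its rightmost column leftwards and, in each column, from the
   diagonal upwards; its components are weak equivalences because a square
   whose right side is a weak equivalence has one on its left side.  Likewise
   every sequence A_0 ->> ... ->> A_{n-1} ->> O is the rightmost column of
   the staircase obtained by filling cospans with the section t of j^* in the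
   same order.  So U_n is fully faithful and split essentially surjective. *)

From Stdlib Require Import ProofIrrelevance ClassicalEpsilon.
From mathcomp Require Import all_boot zify.
Set Implicit Arguments. Unset Strict Implicit. Unset Printing Implicit Defensive.

Section SplitEquivalence.
Variables (Cc Dc : Cat) (F : Functor Cc Dc).
Variable fpre : forall a b, hom (F a) (F b) -> hom a b.
Hypothesis fhom_pre : forall a b (g : hom (F a) (F b)), fhom F (fpre g) = g.
Hypothesis fhom_inj : forall a b (f f' : hom a b), fhom F f = fhom F f' -> f = f'.
Variable Gob : ob Dc -> ob Cc.
Variables (eps : forall d, hom (F (Gob d)) d) (eps' : forall d, hom d (F (Gob d))).
Hypothesis eps_eps' : forall d, ccomp (eps d) (eps' d) = cid _.
Hypothesis eps'_eps : forall d, ccomp (eps' d) (eps d) = cid _.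

Definition quasi_inverse : Functor Dc Cc.
Proof.
refine (@BuildFunctor Dc Cc Gob
          (fun d d' g => fpre (ccomp (eps d) (ccomp g (eps' d')))) _ _).
- by move=> d; apply: fhom_inj; rewrite fhom_pre fhom_id ccomp_id_l eps_eps'.
- move=> a b c f g; apply: fhom_inj; rewrite fhom_comp !fhom_pre !ccomp_assoc.
  by rewrite -(ccomp_assoc (eps' b)) eps'_eps ccomp_id_l.
Defined.

Lemma full_faithful_split_equivalence : is_equivalence F.
Proof.
exists quasi_inverse; split; constructor.
- refine (@BuildNatIso _ _ (IdF Cc) (CompF F quasi_inverse)
    (fun c => fpre (eps' (F c))) (fun c => fpre (eps (F c))) _ _ _).
  + by move=> c; apply: fhom_inj; rewrite fhom_comp !fhom_pre fhom_id /= eps'_eps.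
  + by move=> c; apply: fhom_inj; rewrite fhom_comp !fhom_pre fhom_id /= eps_eps'.
  + move=> a b f; apply: fhom_inj; rewrite /= !fhom_comp !fhom_pre.
    by rewrite -!ccomp_assoc eps'_eps ccomp_id_l.
- refine (@BuildNatIso _ _ (CompF quasi_inverse F) (IdF Dc) eps eps' _ _ _) => //.
  move=> a b f /=; rewrite fhom_pre -!ccomp_assoc.
  by rewrite ccomp_assoc eps'_eps ccomp_id_r.
Qed.

End SplitEquivalence.

Section Isostable.
Variable C : SquaresCat.
Hypothesis vwe_invertible : forall (A B : dob C) (f : dV A B), vwe f ->
  exists g : dV B A, compV f g = idV A /\ compV g f = idV B.
Hypothesis inverse_sq : inverse_squares C.
Variable ST : stable_iii_iv C.
Local Notation Ob := (dob C).
Local Notation O := (sO C).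

Lemma zH_eq (A : Ob) (f g : dH O A) : f = g.
Proof. by rewrite (zH_uniq f) (zH_uniq g). Qed.

Lemma zV_eq (A : Ob) (f g : dV A O) : f = g.
Proof. by rewrite (zV_uniq f) (zV_uniq g). Qed.

Definition vinv (A B : Ob) (f : dV A B) (hf : vwe f) : dV B A :=
  proj1_sig (constructive_indefinite_description _ (vwe_invertible hf)).

Lemma compV_vinv_r (A B : Ob) (f : dV A B) (hf : vwe f) : compV f (vinv hf) = idV A.
Proof. by rewrite /vinv; case: constructive_indefinite_description => g []. Qed.

Lemma compV_vinv_l (A B : Ob) (f : dV A B) (hf : vwe f) : compV (vinv hf) f = idV B.
Proof. by rewrite /vinv; case: constructive_indefinite_description => g []. Qed.

Lemma vwe_inverse (A B : Ob) (f : dV A B) (g : dV B A) :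
  compV f g = idV A -> compV g f = idV B -> vwe f -> vwe g.
Proof.
move=> fg gf; exact: (inverse_sq (zH A) (zH B) (compV_id_l _) (compV_id_l _) fg gf).1.
Qed.

Lemma vwe_vinv (A B : Ob) (f : dV A B) (hf : vwe f) : vwe (vinv hf).
Proof. exact: vwe_inverse (compV_vinv_r hf) (compV_vinv_l hf) hf. Qed.

Lemma vwe_cancel_l (A B D : Ob) (f : dV A B) (g : dV B D) :
  vwe f -> vwe (compV f g) -> vwe g.
Proof.
move=> hf hfg.
have -> : g = compV (vinv hf) (compV f g) by rewrite -compV_assoc compV_vinv_l compV_id_l.
exact: vwe_comp (vwe_vinv hf) hfg.
Qed.

(* [sq] and [hb] (a square with left side [idV O]) restrict under [j^*] to the
   same cospan, so by [u_g] their left legs differ by the weak equivalences [u_a]. *)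
Lemma vwe_zV_of_sq (A B B' : Ob) (f : dH A B) (b : dV B B') :
  dSq f (zV A) b (zH B') -> vwe b -> vwe (zV A).
Proof.
move=> sq hb.
have eW := u_g ST (BuildBoxObj sq); have eb := u_g ST (BuildBoxObj hb).
rewrite /= !compV_id_r in eW eb.
apply: (vwe_cancel_l (u_a_we ST (BuildBoxObj sq))).
by rewrite -eW eb; exact: (u_a_we ST (BuildBoxObj hb)).
Qed.

(* Fill the cospan [(x, 0)] with [t]; pasting the filler with [sq] shows, by
   [vwe_zV_of_sq], that its corner is weakly zero, hence that [x] is a weak
   equivalence. *)
Lemma vwe_sq_left (A B A' B' : Ob) (f : dH A B) (x : dV A A') (b : dV B B')
    (f' : dH A' B') :
  dSq f x b f' -> vwe b -> vwe x.
Proof.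
move=> sq hb.
pose N := @BuildCospanObj C A O A' x (zH A').
have sqN : dSq (t_f ST N) (zV _) x (zH A') by rewrite -(zV_uniq (t_g ST N)); exact: t_sq.
have hN : vwe (zV (t_A ST N)).
  apply: (vwe_zV_of_sq (f := compH (t_f ST N) f)) hb.
  by rewrite -(zH_uniq (compH (zH A') f')); exact: sq_compH sqN sq.
have := sq_compH hN sqN.
by rewrite (zH_eq (compH _ _) (zH A)) (zH_eq (compH _ _) (zH A')).
Qed.

Section Fill.
Variables (X Y : BoxObj C).

Definition fill (q : CospanHom (j_obj X) (j_obj Y)) : dV (qA X) (qA Y) :=
  compV (vinv (u_a_we ST X)) (compV (t_a ST q) (u_a ST Y)).

Lemma fill_f (q : CospanHom (j_obj X) (j_obj Y)) : dSq (qf X) (fill q) (ctb q) (qf Y).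
Proof.
have sqX : dSq (qf X) (vinv (u_a_we ST X)) (idV _) (t_f ST (j_obj X)).
  exact: (inverse_sq _ _ (compV_vinv_r (u_a_we ST X)) (compV_vinv_l _)
            (compV_id_l _) (compV_id_l _)).1 (u_f ST X).
have := sq_compV (sq_compV sqX (t_a_f ST q)) (u_f ST Y).
by rewrite /fill !compV_assoc !compV_id_l compV_id_r.
Qed.

Lemma fill_g (q : CospanHom (j_obj X) (j_obj Y)) :
  compV (qg X) (ctc q) = compV (fill q) (qg Y).
Proof.
have eX := u_g ST X; have eY := u_g ST Y.
rewrite compV_id_r in eX; rewrite compV_id_r in eY.
by rewrite /fill !compV_assoc -eY -t_a_g eX -!compV_assoc compV_vinv_l compV_id_l.
Qed.

Lemma fill_unique (p : BoxHom X Y) : qta p = fill (j_hom p).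
Proof.
by rewrite /fill u_nat -compV_assoc compV_vinv_l compV_id_l.
Qed.

End Fill.

Lemma subnSS m j : j < m -> m - j = (m - j.+1).+1.
Proof. by move=> h; rewrite subnS prednK // subn_gt0. Qed.

Section Staircases.
Variable n : nat.

Lemma sv_pi (Z : Sobj C n) j k (h1 h1' : j < k) (h2 h2' : k <= n) :
  sv Z h1 h2 = sv Z h1' h2'.
Proof. by rewrite (bool_irrelevance h1 h1') (bool_irrelevance h2 h2'). Qed.

Lemma sh_pi (Z : Sobj C n) j k (h1 h1' : j <= k) (h2 h2' : k < n) :
  sh Z h1 h2 = sh Z h1' h2'.
Proof. by rewrite (bool_irrelevance h1 h1') (bool_irrelevance h2 h2'). Qed.

Lemma st_v_pi (Z Z' : Sobj C n) (p : Shom Z Z') j k (h1 h1' : j < k) (h2 h2' : k <= n)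
    (a1 : j.+1 <= k) (a2 : j <= k) (c1 c2 : k <= n) :
  compV (sv Z h1 h2) (st p a1 c1) = compV (st p a2 c2) (sv Z' h1' h2').
Proof.
rewrite (st_pi p a1 h1 c1 h2) (st_pi p a2 (ltnW h1) c2 h2) (sv_pi Z' h1' h1 h2' h2).
exact: st_v.
Qed.

Lemma st_h_pi (Z Z' : Sobj C n) (p : Shom Z Z') j k (h1 h1' : j <= k) (h2 h2' : k < n)
    (a1 : j <= k) (a2 : k <= n) (b1 : j <= k.+1) (b2 : k.+1 <= n) :
  dSq (sh Z h1 h2) (st p a1 a2) (st p b1 b2) (sh Z' h1' h2').
Proof.
rewrite (st_pi p a1 h1 a2 (ltnW h2)) (st_pi p b1 (leqW h1) b2 h2) (sh_pi Z' h1' h1 h2' h2).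
exact: st_h.
Qed.

Lemma sA_eqO (Z : Sobj C n) j k : j = k -> k <= n -> sA Z j k = O.
Proof. by move=> -> hk; exact: sA_diag. Qed.

Lemma dV_eqO (a b : Ob) (e : b = O) (f g : dV a b) : f = g.
Proof. by move: f g; rewrite e => f g; exact: zV_eq. Qed.

Lemma vwe_eqO (a b : Ob) (ea : a = O) (eb : b = O) (x : dV a b) : vwe x.
Proof. by move: x; rewrite ea eb => x; rewrite (zV_eq x (idV O)); exact: vwe_id. Qed.

Lemma sq_eqO (a a' b b' : Ob) (ea : a = O) (ea' : a' = O) (f : dH a b) (f' : dH a' b')
    (x : dV a a') (y : dV b b') :
  vwe y -> dSq f x y f'.
Proof.
move: f f' x; rewrite ea ea' => f f' x.
by rewrite (zH_eq f (zH b)) (zH_eq f' (zH b')) (zV_eq x (idV O)).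
Qed.

Definition cell_box (Z : Sobj C n) j k (hjk : j < k) (hkn : k < n) : BoxObj C :=
  BuildBoxObj (s_cell Z hjk hkn).

Definition cell_hom (Z Z' : Sobj C n) (p : Shom Z Z') j k (hjk : j < k) (hkn : k < n) :
  BoxHom (cell_box Z hjk hkn) (cell_box Z' hjk hkn) :=
  @BuildBoxHom C (cell_box Z hjk hkn) (cell_box Z' hjk hkn)
    (st p (ltnW hjk) (ltnW hkn)) (st p (leqW (ltnW hjk)) hkn)
    (st p hjk (ltnW hkn)) (st p (leqW hjk) hkn)
    (st_h_pi p _ _ _ _ _ _ _ _) (st_h_pi p _ _ _ _ _ _ _ _)
    (st_v_pi p _ _ _ _ _ _ _ _) (st_v_pi p _ _ _ _ _ _ _ _).

Lemma CospanHom_ext (P Q : CospanObj C) (p q : CospanHom P Q) :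
  ctb p = ctb q -> ctc p = ctc q -> ctd p = ctd q -> p = q.
Proof.
case: p => b c d k h; case: q => b' c' d' k' h' /= eb ec ed; subst b' c' d'.
by rewrite (proof_irrelevance _ k k') (proof_irrelevance _ h h').
Qed.

Section Faithful.
Variables (X Y : Sobj C n) (p q : Shom X Y).

Lemma Shom_cell_eq j k (hjk : j < k) (hkn : k < n) (h1 : j <= k) (h2 : k <= n) :
  (forall (a : j <= k.+1) (b : k.+1 <= n), st p a b = st q a b) ->
  (forall (a : j.+1 <= k) (b : k <= n), st p a b = st q a b) ->
  (forall (a : j.+1 <= k.+1) (b : k.+1 <= n), st p a b = st q a b) ->
  st p h1 h2 = st q h1 h2.
Proof.
move=> eB eC eD.
rewrite (st_pi p h1 (ltnW hjk) h2 (ltnW hkn)) (st_pi q h1 (ltnW hjk) h2 (ltnW hkn)).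
rewrite [LHS](fill_unique (cell_hom p hjk hkn)) [RHS](fill_unique (cell_hom q hjk hkn)).
suff -> : j_hom (cell_hom p hjk hkn) = j_hom (cell_hom q hjk hkn) by [].
by apply: CospanHom_ext => /=; [exact: eB | exact: eC | exact: eD].
Qed.

Lemma Shom_eq_on_last_column :
  (forall i (hi : i < n), st p (ltnW hi) (leqnn n) = st q (ltnW hi) (leqnn n)) -> p = q.
Proof.
move=> eq_last; apply: Shom_ext => j k.
have [m] := ubnP (n - j + (n - k)); elim: m j k => // m IH j k hm h1 h2.
have [ejk|hjk] := eqVneq j k; first exact: dV_eqO (sA_eqO Y ejk h2) _ _.
have {}hjk : j < k by rewrite ltn_neqAle hjk.
have [ekn|hkn] := eqVneq k n.
  subst k; rewrite (st_pi p _ (ltnW hjk) h2 (leqnn n)) (st_pi q _ (ltnW hjk) h2 (leqnn n)).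
  exact: eq_last.
have {}hkn : k < n by rewrite ltn_neqAle hkn.
apply: (Shom_cell_eq hjk hkn) => a b; apply: IH; lia.
Qed.

End Faithful.

Lemma leq_geq_eq j m : j <= m -> m <= j -> j = m.
Proof. by move=> h1 h2; apply/anti_leq/andP. Qed.

Definition to_eqO {a b : Ob} (e : b = O) : dV a b := eq_rect_r (dV a) (zV a) e.

Section Lift.
Variables (X Y : Sobj C n) (phi : Vhom (U_obj X) (U_obj Y)).

(* A column of the morphism being lifted; it is built right to left, and
   [lc_we] is needed to start the next column at the diagonal ([fit_diag]). *)
Record LiftCol (k : nat) := BuildLiftCol {
  lc : forall j, j <= k -> dV (sA X j k) (sA Y j k);
  lc_v : forall j (h1 : j < k) (h2 : k <= n) (h3 : j.+1 <= k) (h4 : j <= k),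
     compV (sv X h1 h2) (lc h3) = compV (lc h4) (sv Y h1 h2);
  lc_we : forall j (h : j <= k), vwe (lc h) }.

Lemma lc_pi k (c : LiftCol k) j (h h' : j <= k) : lc c h = lc c h'.
Proof. by rewrite (bool_irrelevance h h'). Qed.

Definition last_lc j (h : j <= n) : dV (sA X j n) (sA Y j n) :=
  match ltnP j n with
  | LtnNotGeq hlt => vt phi hlt
  | GeqNotLtn hge => to_eqO (sA_eqO Y (leq_geq_eq h hge) (leqnn n))
  end.

Lemma last_lcE j (h : j <= n) (hlt : j < n) : last_lc h = vt phi hlt.
Proof.
rewrite /last_lc; case: ltnP => [h'|h']; first by rewrite (bool_irrelevance h' hlt).
by exfalso; rewrite leqNgt hlt in h'.
Qed.

Lemma last_lc_v j (h1 : j < n) (h2 : n <= n) (h3 : j.+1 <= n) (h4 : j <= n) :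
  compV (sv X h1 h2) (last_lc h3) = compV (last_lc h4) (sv Y h1 h2).
Proof.
case: (ltnP j.+1 n) => hj.
  rewrite (last_lcE h3 hj) (last_lcE h4 (ltnW hj)) (sv_pi X h1 (ltnW hj) h2 (leqnn n)).
  by rewrite (sv_pi Y h1 (ltnW hj) h2 (leqnn n)); exact: (vt_comm phi hj).
by apply: dV_eqO; exact: sA_eqO (leq_geq_eq _ hj) (leqnn n).
Qed.

Lemma last_lc_we j (h : j <= n) : vwe (last_lc h).
Proof.
case: (ltnP j n) => hj; first by rewrite (last_lcE h hj); exact: (vt_we phi hj).
by apply: vwe_eqO; exact: sA_eqO (leq_geq_eq _ hj) (leqnn n).
Qed.

Definition last_col : LiftCol n := BuildLiftCol last_lc_v last_lc_we.

Section PrevCol.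
Variables (k : nat) (hkn : k < n) (c : LiftCol k.+1).

Definition fits j (x : dV (sA X j k) (sA Y j k)) : Prop :=
  forall (h1 : j <= k) (h4 : j <= k.+1), dSq (sh X h1 hkn) x (lc c h4) (sh Y h1 hkn).

Definition fit j : Type := {x : dV (sA X j k) (sA Y j k) | fits x}.

Definition fit_diag j (e : j = k) : fit j.
Proof.
exists (to_eqO (sA_eqO Y e (ltnW hkn))) => h1 h4.
exact: sq_eqO (sA_eqO X e (ltnW hkn)) (sA_eqO Y e (ltnW hkn)) _ _ _ _ (lc_we c h4).
Defined.

Definition cell_cospan_hom j (hjk : j < k) (r : fit j.+1) :
  CospanHom (j_obj (cell_box X hjk hkn)) (j_obj (cell_box Y hjk hkn)) :=
  @BuildCospanHom C (j_obj (cell_box X hjk hkn)) (j_obj (cell_box Y hjk hkn))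
    (lc c (leqW (ltnW hjk))) (proj1_sig r) (lc c (leqW hjk))
    (proj2_sig r hjk (leqW hjk))
    (lc_v c (ltnW hjk) hkn (leqW hjk) (leqW (ltnW hjk))).

Definition fit_fill j (hjk : j < k) (r : fit j.+1) : fit j.
Proof.
exists (fill (cell_cospan_hom hjk r)) => h1 h4; have := fill_f (cell_cospan_hom hjk r).
by rewrite /= (sh_pi X h1 (ltnW hjk) hkn hkn) (sh_pi Y h1 (ltnW hjk) hkn hkn)
  (lc_pi c h4 (leqW (ltnW hjk))).
Defined.

Lemma addS_ltn g j : g.+1 + j = k -> j < k.
Proof. by move=> <-; rewrite addSn ltnS leq_addl. Qed.

(* Rows are filled from the diagonal [j = k] upwards; indexing by [g + j = k]
   makes the recursion structural in the distance [g] to the diagonal. *)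
Fixpoint fit_rows (g : nat) : forall j, g + j = k -> fit j :=
  match g return forall j, g + j = k -> fit j with
  | 0 => fun j e => fit_diag e
  | g'.+1 => fun j e =>
      fit_fill (addS_ltn e) (@fit_rows g' j.+1 (etrans (esym (addSnnS g' j)) e))
  end.

Lemma fit_rows_pi g g' j (e : g + j = k) (e' : g' + j = k) :
  g = g' -> fit_rows e = fit_rows e'.
Proof. by move=> E; subst g'; rewrite (proof_irrelevance _ e e'). Qed.

Definition prev_lc j (h : j <= k) : dV (sA X j k) (sA Y j k) :=
  proj1_sig (fit_rows (subnK h)).

Lemma prev_lcS j (hjk : j < k) (h : j <= k) :
  prev_lc h = fill (cell_cospan_hom hjk (fit_rows (subnK hjk))).
Proof.
have e' : (k - j.+1).+1 + j = k := etrans (addSnnS _ _) (subnK hjk).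
rewrite /prev_lc (fit_rows_pi (subnK h) e' (subnSS hjk)) /=.
by rewrite (bool_irrelevance (addS_ltn e') hjk) (fit_rows_pi _ (subnK hjk) erefl).
Qed.

Lemma prev_lc_v j (h1 : j < k) (h2 : k <= n) (h3 : j.+1 <= k) (h4 : j <= k) :
  compV (sv X h1 h2) (prev_lc h3) = compV (prev_lc h4) (sv Y h1 h2).
Proof.
rewrite (prev_lcS h1 h4) (sv_pi Y h1 h1 h2 (ltnW hkn)).
have /= <- := fill_g (cell_cospan_hom h1 (fit_rows (subnK h1))).
by rewrite (sv_pi X h1 h1 h2 (ltnW hkn)) /prev_lc (fit_rows_pi (subnK h3) (subnK h1) erefl).
Qed.

Lemma prev_lc_sq j (h1 : j <= k) (h3 : j <= k) (h4 : j <= k.+1) :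
  dSq (sh X h1 hkn) (prev_lc h3) (lc c h4) (sh Y h1 hkn).
Proof. exact: (proj2_sig (fit_rows (subnK h3))). Qed.

Lemma prev_lc_we j (h : j <= k) : vwe (prev_lc h).
Proof. exact: vwe_sq_left (prev_lc_sq h h (leqW h)) (lc_we c _). Qed.

Definition prev_col : LiftCol k := BuildLiftCol prev_lc_v prev_lc_we.

End PrevCol.

Lemma addS_ltn_n f k : f.+1 + k = n -> k < n.
Proof. by move=> <-; rewrite addSnnS leq_addl. Qed.

Fixpoint lift_cols (f : nat) : forall k, f + k = n -> LiftCol k :=
  match f with
  | 0 => fun k e => eq_rect n LiftCol last_col k (esym e)
  | f'.+1 => fun k e =>
      prev_col (addS_ltn_n e) (@lift_cols f' k.+1 (etrans (esym (addSnnS f' k)) e))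
  end.

Lemma lift_cols_pi f f' k (e : f + k = n) (e' : f' + k = n) :
  f = f' -> lift_cols e = lift_cols e'.
Proof. by move=> E; subst f'; rewrite (proof_irrelevance _ e e'). Qed.

Lemma lift_colsS k (hkn : k < n) (e : n - k + k = n) :
  lift_cols e = prev_col hkn (lift_cols (subnK hkn)).
Proof.
have e' : (n - k.+1).+1 + k = n := etrans (addSnnS _ _) (subnK hkn).
rewrite (lift_cols_pi e e' (subnSS hkn)) /=.
by rewrite (bool_irrelevance (addS_ltn_n e') hkn) (lift_cols_pi _ (subnK hkn) erefl).
Qed.

Definition lift_st j k (h1 : j <= k) (h2 : k <= n) : dV (sA X j k) (sA Y j k) :=
  lc (lift_cols (subnK h2)) h1.

Lemma lift_st_h j k (hjk : j <= k) (hkn : k < n) :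
  dSq (sh X hjk hkn) (lift_st hjk (ltnW hkn)) (lift_st (leqW hjk) hkn) (sh Y hjk hkn).
Proof. by rewrite /lift_st (lift_colsS hkn); exact: prev_lc_sq. Qed.

Lemma lift_st_v j k (hjk : j < k) (hkn : k <= n) :
  compV (sv X hjk hkn) (lift_st hjk hkn) = compV (lift_st (ltnW hjk) hkn) (sv Y hjk hkn).
Proof. exact: lc_v. Qed.

Definition lift : Shom X Y := BuildShom lift_st_h lift_st_v.

Lemma U_lift : U_hom lift = phi.
Proof.
apply: Vhom_ext => i hi /=.
rewrite /lift_st (lift_cols_pi (subnK (leqnn n)) (erefl : 0 + n = n)) ?subnn //=.
exact: last_lcE.
Qed.

End Lift.

Section VhomInverse.
Variables (P Q : Vobj C n) (p : Vhom P Q) (q : forall i, i < n -> dV (vA Q i) (vA P i)).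
Hypothesis pq : forall i (hi : i < n), compV (vt p hi) (q hi) = idV _.
Hypothesis qp : forall i (hi : i < n), compV (q hi) (vt p hi) = idV _.

Lemma Vhom_inv_comm i (hi : i.+1 < n) :
  compV (vp Q hi) (q hi) = compV (q (ltnW hi)) (vp P hi).
Proof.
rewrite -[LHS]compV_id_l -(qp (ltnW hi)) !compV_assoc -(compV_assoc (vt p _)).
by rewrite -vt_comm !compV_assoc pq compV_id_r.
Qed.

Definition Vhom_inv : Vhom Q P :=
  @BuildVhom C n Q P q (fun i hi => vwe_inverse (pq hi) (qp hi) (vt_we p hi))
    Vhom_inv_comm
    (fun i hi => zV_eq _ _).

Lemma Vhom_invK : Vcomp p Vhom_inv = Vid P.
Proof. by apply: Vhom_ext => i hi /=; exact: pq. Qed.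

Lemma Vhom_invVK : Vcomp Vhom_inv p = Vid Q.
Proof. by apply: Vhom_ext => i hi /=; exact: qp. Qed.

End VhomInverse.

Definition eqV {a b : Ob} (e : a = b) : dV a b := eq_rect a (dV a) (idV a) b e.

Lemma vwe_eqV (a b : Ob) (e : a = b) : vwe (eqV e).
Proof. by case: b / e; exact: vwe_id. Qed.

Lemma eqV_pi (a b : Ob) (e e' : a = b) : eqV e = eqV e'.
Proof. by rewrite (proof_irrelevance _ e e'). Qed.

Lemma compV_eqV (a b c : Ob) (e : a = b) (e' : b = c) :
  compV (eqV e) (eqV e') = eqV (etrans e e').
Proof. by case: c / e'; case: b / e; exact: compV_id_l. Qed.

Definition castHl {a a' b : Ob} (e : a = a') (f : dH a b) : dH a' b :=
  eq_rect a (fun x => dH x b) f a' e.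

Record Column := BuildColumn { col : nat -> Ob; col_v : forall j, dV (col j) (col j.+1) }.

Section PrevColumn.
Variable c : Column.

Definition column_cospan j (r : {A : Ob & dH A (col c j.+1)}) : CospanObj C :=
  @BuildCospanObj C (col c j) (projT1 r) (col c j.+1) (col_v c j) (projT2 r).

(* [t_tower g j] fills, with the section [t], the [g] cells between row [j + g]
   (where the new entry is [O]) and row [j] to the left of the column [c]. *)
Fixpoint t_tower (g j : nat) : {A : Ob & dH A (col c j)} :=
  match g with
  | 0 => existT _ O (zH (col c j))
  | g'.+1 => existT _ (t_A ST (column_cospan (t_tower g' j.+1)))
                      (t_f ST (column_cospan (t_tower g' j.+1)))
  end.

Definition t_tower_v (g j : nat) :
  dV (projT1 (t_tower g j)) (projT1 (t_tower g.-1 j.+1)) :=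
  match g with
  | 0 => idV O
  | g'.+1 => t_g ST (column_cospan (t_tower g' j.+1))
  end.

Lemma t_tower_sq g j :
  dSq (projT2 (t_tower g.+1 j)) (t_tower_v g.+1 j) (col_v c j) (projT2 (t_tower g j.+1)).
Proof. exact: t_sq. Qed.

Variable kk : nat.

Definition prev_column_eq j :
  projT1 (t_tower (kk - j).-1 j.+1) = projT1 (t_tower (kk - j.+1) j.+1) :=
  f_equal (fun g => projT1 (t_tower g j.+1)) (esym (subnS kk j)).

Definition prev_column : Column :=
  @BuildColumn (fun j => projT1 (t_tower (kk - j) j))
    (fun j => compV (t_tower_v (kk - j) j) (eqV (prev_column_eq j))).

Definition prev_column_h j : dH (col prev_column j) (col c j) := projT2 (t_tower (kk - j) j).

Lemma prev_column_cell j : j < kk ->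
  dSq (prev_column_h j) (col_v prev_column j) (col_v c j) (prev_column_h j.+1).
Proof.
move=> hj; rewrite /prev_column_h /=; move: (prev_column_eq j).
rewrite (subnSS hj) => E; rewrite (eqV_pi E erefl) compV_id_r; exact: t_tower_sq.
Qed.

End PrevColumn.

Section Realization.
Variable Yv : Vobj C n.

Definition last_ob j : Ob := if j < n then vA Yv j else O.

Lemma last_ob_lt j : j < n -> last_ob j = vA Yv j.
Proof. by rewrite /last_ob => ->. Qed.

Lemma last_ob_ge j : n <= j -> last_ob j = O.
Proof. by rewrite /last_ob ltnNge => ->. Qed.

Definition last_ob_v j : dV (last_ob j) (last_ob j.+1) :=
  match ltnP j.+1 n with
  | LtnNotGeq h =>
      compV (eqV (last_ob_lt (ltnW h))) (compV (vp Yv h) (eqV (esym (last_ob_lt h))))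
  | GeqNotLtn h => compV (zV _) (eqV (esym (last_ob_ge h)))
  end.

Lemma last_ob_vE i (h : i.+1 < n) :
  last_ob_v i
  = compV (eqV (last_ob_lt (ltnW h))) (compV (vp Yv h) (eqV (esym (last_ob_lt h)))).
Proof.
rewrite /last_ob_v; case: ltnP => [h'|h']; first by rewrite (bool_irrelevance h' h).
by exfalso; rewrite leqNgt h in h'.
Qed.

Fixpoint columns (f : nat) : Column :=
  match f with
  | 0 => BuildColumn last_ob_v
  | f'.+1 => prev_column (columns f') (n - f'.+1)
  end.

Lemma columns_eqO f j : n - f <= j -> col (columns f) j = O.
Proof.
case: f => [|f] /= h; first by rewrite subn0 in h; exact: last_ob_ge.
by have /eqP -> : n - f.+1 - j == 0 by rewrite subn_eq0.
Qed.

Definition real_A j k : Ob := col (columns (n - k)) j.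

Lemma real_A_diag j : j <= n -> real_A j j = O.
Proof. by move=> h; apply: columns_eqO; rewrite subKn. Qed.

Definition real_h_eq k (hkn : k < n) j :
  col (columns (n - k.+1).+1) j = col (columns (n - k)) j :=
  f_equal (fun f => col (columns f) j) (esym (subnSS hkn)).

Definition real_h j k (hjk : j <= k) (hkn : k < n) : dH (real_A j k) (real_A j k.+1) :=
  castHl (real_h_eq hkn j) (prev_column_h (columns (n - k.+1)) (n - (n - k.+1).+1) j).

Definition real_v j k (hjk : j < k) (hkn : k <= n) : dV (real_A j k) (real_A j.+1 k) :=
  col_v (columns (n - k)) j.

Lemma real_cell j k (hjk : j < k) (hkn : k < n) :
  dSq (real_h (ltnW hjk) hkn) (real_v hjk (ltnW hkn)) (real_v (k := k.+1) (ltnW hjk) hkn)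
      (real_h (j := j.+1) hjk hkn).
Proof.
rewrite /real_h /real_v /real_A; move: (real_h_eq hkn j) (real_h_eq hkn j.+1).
have hj : j < n - (n - k.+1).+1 by rewrite -subnSS // subKn // ltnW.
rewrite (subnSS hkn) => E1 E2.
rewrite (proof_irrelevance _ E1 erefl) (proof_irrelevance _ E2 erefl).
exact: prev_column_cell.
Qed.

Definition realization : Sobj C n := BuildSobj real_A_diag real_cell.

Lemma U_realization_eq i (hi : i < n) : sA realization i n = vA Yv i.
Proof. by rewrite /= /real_A subnn; exact: last_ob_lt. Qed.

Lemma U_realization_comm i (hi : i.+1 < n) :
  compV (vp (U_obj realization) hi) (eqV (U_realization_eq hi))
  = compV (eqV (U_realization_eq (ltnW hi))) (vp Yv hi).
Proof.
move: (U_realization_eq hi) (U_realization_eq (ltnW hi)).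
rewrite /= /real_v /real_A subnn => E2 E1 /=.
rewrite last_ob_vE !compV_assoc compV_eqV (eqV_pi _ erefl) compV_id_r.
by rewrite (eqV_pi E1 (last_ob_lt (ltnW hi))).
Qed.

Definition U_realization_iso : Vhom (U_obj realization) Yv :=
  @BuildVhom C n (U_obj realization) Yv (fun i hi => eqV (U_realization_eq hi))
    (fun i hi => vwe_eqV _) U_realization_comm
    (fun i hi => zV_eq _ _).

Lemma U_realization_isoK i (hi : i < n) :
  compV (vt U_realization_iso hi) (eqV (esym (U_realization_eq hi))) = idV _.
Proof. by rewrite /= compV_eqV (eqV_pi _ erefl). Qed.

Lemma U_realization_isoVK i (hi : i < n) :
  compV (eqV (esym (U_realization_eq hi))) (vt U_realization_iso hi) = idV _.
Proof. by rewrite /= compV_eqV (eqV_pi _ erefl). Qed.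

End Realization.

Lemma U_hom_inj (X Y : Sobj C n) (p q : Shom X Y) : U_hom p = U_hom q -> p = q.
Proof.
by move=> E; apply: Shom_eq_on_last_column => i hi; exact: (f_equal (fun z => vt z hi) E).
Qed.

Lemma U_functor_equivalence : is_equivalence (U_functor C n).
Proof.
pose iso_inv Yv := Vhom_inv (U_realization_isoK Yv) (U_realization_isoVK Yv).
apply: (@full_faithful_split_equivalence _ _ (U_functor C n) lift U_lift U_hom_inj
          realization U_realization_iso iso_inv) => Yv.
- exact: Vhom_invK.
- exact: Vhom_invVK.
Qed.

End Staircases.
End Isostable.

Theorem lemma3p26 (C : SquaresCat) (HC : isostable C) (n : nat) :
  is_equivalence (U_functor C n).
Proof.
case: HC => [[_ [ST]] [[vwe_invertible _] inverse_sq]].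
exact: U_functor_equivalence.
Qed.
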